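(* Assume $m\le n$. Then there do not exist distinct Generalized Nash equilibria $\mathbf{x}=(\mathbf{x}_1,\dots,\mathbf{x}_n)$ and $\mathbf{y}=(\mathbf{y}_1,\dots,\mathbf{y}_n)$ of $G^{(2)}$ such that $\mathbf{x}_T^{(j)}\le\mathbf{y}_T^{(j)}$ for all $j\in[m]$ and $\sum_{j\in[m]}\mathbf{x}_T^{(j)}<\sum_{j\in[m]}\mathbf{y}_T^{(j)}$.
   Context: $G^{(2)}$ is a Fragile multi-CPR Game with $n\ge1$ players and $m\ge1$ CPRs: $[k]=\{1,\dots,k\}$, $C_m=\{(x_1,\dots,x_m)\in[0,1]^m:\sum_j x_j\le1\}$, $\mathcal{C}_n=\prod_{i\in[n]}C_m$, $\mathcal{C}_{-i}=\prod_{[n]\setminus\{i\}}C_m$. A profile is $\mathbf{x}=(\mathbf{x}_1,\dots,\mathbf{x}_n)$, $\mathbf{x}_i=(x_{i1},\dots,x_{im})$; write $\mathbf{x}=(\mathbf{x}_i,\mathbf{x}_{-i})$; $\mathbf{x}_T^{(j)}=\sum_i x_{ij}$, $\mathbf{x}_T^{j|i}=\sum_{\ell\ne i}x_{\ell j}$. Each CPR $j$ has return rate $\mathcal{R}_j(t)>1$ and failure probability $p_j(t)\in[0,1]$; each player $i$ has parameters $a_i,k_i$. $\mathcal{F}_{ij}(t)=(\mathcal{R}_j(t)-1)^{a_i}(1-p_j(t))-k_ip_j(t)$; utility $\mathcal{V}_i(\mathbf{x}_i;\mathbf{x}_{-i})=\sum_j x_{ij}^{a_i}\mathcal{F}_{ij}(\mathbf{x}_T^{(j)})$.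 Assumption: (1) $p_j(0)=0$, $p_j(t)=1$ for $t\ge1$; (2) $a_i\in(0,1]$, $k_i>0$; (3) each $\mathcal{F}_{ij}$ (continuous on $[0,1]$) has strictly negative first and second derivatives on $(0,1)$. $\omega_{ij}\in(0,1)$ is the unique zero of $\mathcal{F}_{ij}$ in $(0,1)$. $A(\mathbf{x}_{-i})=\{j:\mathbf{x}_T^{j|i}<\omega_{ij}\}$. $\vartheta_i(\mathbf{x}_{-i})=C_m\cap\big(\prod_{j\in A(\mathbf{x}_{-i})}[0,\omega_{ij}-\mathbf{x}_T^{j|i}]\times\prod_{j\notin A(\mathbf{x}_{-i})}\{0\}\big)$. A Generalized Nash equilibrium is $\mathbf{x}\in\mathcal{C}_n$ with, for all $i$, $\mathbf{x}_i\in\vartheta_i(\mathbf{x}_{-i})$ and $\mathcal{V}_i(\mathbf{x}_i;\mathbf{x}_{-i})\ge\mathcal{V}_i(\mathbf{z};\mathbf{x}_{-i})$ for all $\mathbf{z}\in\vartheta_i(\mathbf{x}_{-i})$. *)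

From HB Require Import structures.
From mathcomp Require Import all_boot all_order all_algebra.
From mathcomp Require Import all_classical all_reals all_analysis.
Set Implicit Arguments. Unset Strict Implicit. Unset Printing Implicit Defensive.
Import Order.TTheory GRing.Theory Num.Theory.
Local Open Scope ring_scope.

Section FragileCPR.
Variables (R : realType) (n m : nat).

(* A profile: x i j = investment of player i in CPR j. *)
Definition profile := 'I_n -> 'I_m -> R.

Definition in_Cm (z : 'I_m -> R) : Prop :=
  (forall j, 0 <= z j <= 1) /\ \sum_(j < m) z j <= 1.

Definition in_Cn (x : profile) : Prop := forall i, in_Cm (x i).

Definition xT (x : profile) (j : 'I_m) : R := \sum_(i < n) x i j.

Definition xT_but (x : profile) (i : 'I_n) (j : 'I_m) : R :=
  \sum_(l < n | l != i) x l j.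

Definition upd (x : profile) (i : 'I_n) (z : 'I_m -> R) : profile :=
  fun l => if l == i then z else x l.

Definition Fij (Rr p : 'I_m -> R -> R) (a k : 'I_n -> R)
  (i : 'I_n) (j : 'I_m) (t : R) : R :=
  (Rr j t - 1) `^ (a i) * (1 - p j t) - k i * p j t.

Definition Vi (Rr p : 'I_m -> R -> R) (a k : 'I_n -> R)
  (i : 'I_n) (x : profile) : R :=
  \sum_(j < m) (x i j) `^ (a i) * Fij Rr p a k i j (xT x j).

(* vartheta_i(x_{-i}); omega i j is the unique zero of F_{ij} in (0,1) *)
Definition in_vartheta (omega : 'I_n -> 'I_m -> R) (x : profile) (i : 'I_n)
  (z : 'I_m -> R) : Prop :=
  in_Cm z /\
  forall j : 'I_m,
    if xT_but x i j < omega i j then 0 <= z j <= omega i j - xT_but x i j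
    else z j == 0.

Definition is_GNE (Rr p : 'I_m -> R -> R) (a k : 'I_n -> R)
  (omega : 'I_n -> 'I_m -> R) (x : profile) : Prop :=
  in_Cn x /\
  forall i : 'I_n,
    in_vartheta omega x i (x i) /\
    forall z : 'I_m -> R, in_vartheta omega x i z ->
      Vi Rr p a k i (upd x i z) <= Vi Rr p a k i x.

End FragileCPR.

From HB Require Import structures.
From mathcomp Require Import all_boot all_order all_algebra.
From mathcomp Require Import all_classical all_reals all_analysis.
From mathcomp Require Import ring lra.
Import Order.TTheory GRing.Theory Num.Theory numFieldNormedType.Exports.
Local Open Scope ring_scope.
Local Open Scope classical_set_scope.

(* Since sum_j x_T^(j) < sum_j y_T^(j), some player i invests less in total at
   x than at y, so his budget is not exhausted at x, and x_ij < y_ij for some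
   CPR j.  Write u := x_ij, v := y_ij and s := x_T^{j|i}, t := y_T^{j|i}; then
   u + s <= v + t.  At y, player i cannot gain by lowering v; at x, he cannot
   gain by raising u slightly.  The one-sided derivatives of w |-> w^a F(w + s)
   then give
     u F'(u + s) + a F(u + s) <= 0 <= v F'(v + t) + a F(v + t),
   which is impossible since F and F' are nonincreasing, F' < 0 and u < v. *)

Section OneSidedMaxima.
Context {R : realType}.

Lemma derive1_le0_at_right_max (f : R -> R) (c e : R) : 0 < e ->
  derivable f c 1 -> (forall h, 0 < h < e -> f (c + h) <= f c) -> f^`() c <= 0.
Proof.
move=> e_gt0 df cmax; rewrite derive1E ['D_1 f c]cvg_at_rightE; last exact: df.
apply: limr_le.
  rewrite -(cvg_at_rightE (fun h : R => h^-1 *: ((f \o shift c) _ - f c))) //.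
  apply: cvg_trans df; apply: cvg_app.
  move=> A [e' e'_gt0 Ae]; exists e' => // h he h_gt0; apply: Ae => //.
  exact/lt0r_neq0.
near=> h; apply: mulr_ge0_le0.
  by rewrite invr_ge0; apply: ltW; near: h; exists 1 => /=.
rewrite subr_le0 [_%:A]mulr1 /= addrC; apply: cmax; near: h.
exists e => //= h; rewrite /= distrC subr0.
move=> /(le_lt_trans (ler_norm _)) he h_gt0.
by rewrite h_gt0 he.
Unshelve. all: by end_near. Qed.

Lemma derive1_ge0_at_left_max (f : R -> R) (c e : R) : 0 < e ->
  derivable f c 1 -> (forall h, 0 < h < e -> f (c - h) <= f c) -> 0 <= f^`() c.
Proof.
move=> e_gt0 df cmax.
have [dfN dfN_val] : is_derive (- c) 1 (f \o -%R) (derive1 f c * - 1).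
  by apply: is_derive1_comp; rewrite opprK derive1E; exact: derivableP.
have := @derive1_le0_at_right_max _ (- c) e e_gt0 dfN.
rewrite derive1E dfN_val mulrN1 oppr_le0; apply=> h h_itv.
by rewrite /= opprD !opprK cmax.
Qed.

End OneSidedMaxima.

Lemma sumr_lt_exists {R : realDomainType} {I : finType} {F G : I -> R} :
  \sum_i F i < \sum_i G i -> exists i, F i < G i.
Proof.
apply: contraPP => /forallNP FG; apply/negP; rewrite -leNgt.
by apply: ler_sum => i _; rewrite leNgt; apply/negP/FG.
Qed.

(* The j-th summand of V_i, as a function of player i's own share w of CPR j
   when the other players put s into it. *)
Definition share_payoff {R : realType} (F : R -> R) (a s w : R) : R :=
  w `^ a * F (w + s).

Section ShareOfOneResource.
Context {R : realType} {F : R -> R} {alpha omega : R}.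
Hypothesis F_cont : {within `[0, 1], continuous F}.
Hypothesis F'_lt0 : forall t, 0 < t < 1 -> derivable F t 1 /\ F^`() t < 0.
Hypothesis F''_lt0 : forall t, 0 < t < 1 -> derivable F^`() t 1 /\ F^`(2) t < 0.
Hypothesis alpha_gt0 : 0 < alpha.
Hypothesis omega_gt0 : 0 < omega.
Hypothesis omega_lt1 : omega < 1.
Hypothesis F_omega : F omega = 0.

Implicit Types s t u v w e : R.

Local Notation payoff := (share_payoff F alpha).

Definition marginal_share_payoff (s w : R) : R :=
  w * derive1 F (w + s) + alpha * F (w + s).

Local Notation marginal := marginal_share_payoff.

Let F_decr : {in `[0, 1]%R &, {homo F : s t /~ s < t}}.
Proof.
by apply: (ltr0_derive1_lt_cc _ _ F_cont) => t /[!in_itv] /F'_lt0 [].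
Qed.

Let F_gt0 t : 0 <= t < omega -> 0 < F t.
Proof.
move=> /andP[t_ge0 t_lt]; rewrite -F_omega.
by apply: F_decr; rewrite ?in_itv /= ?t_ge0 ?ltW // (lt_trans t_lt).
Qed.

Let derive1F_nincr : {in `]0, 1[%R &, {homo F^`() : s t /~ s <= t}}.
Proof.
apply: ler0_derive1_le_oo => t; first by rewrite in_itv => /F''_lt0 [].
  by rewrite in_itv => /F''_lt0 [_ /ltW].
rewrite inE /= in_itv => /F''_lt0 [dF' _].
exact/differentiable_continuous/derivable1_diffP.
Qed.

Lemma share_payoff_gt0 s w :
  0 <= s -> 0 < w -> w + s < omega -> 0 < payoff s w.
Proof. by move=> *; apply: mulr_gt0; [exact: powR_gt0 | apply: F_gt0; lra]. Qed.

Lemma is_derive_share_payoff s w : 0 < w -> 0 < w + s < 1 ->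
  is_derive w 1 (payoff s) (w `^ (alpha - 1) * marginal s w).
Proof.
move=> w_gt0 ws_itv.
have dFs : is_derive w 1 (F \o shift s) (derive1 F (w + s) * 1).
  apply: is_derive1_comp; last exact: is_derive_shift.
  by rewrite derive1E; apply: derivableP; have [] := F'_lt0 _ ws_itv.
apply: is_derive_eq (is_deriveM (is_derive1_powR alpha w_gt0) dFs) _.
have -> : w `^ alpha = w `^ (alpha - 1) * w.
  rewrite -[X in _ * X]powRr1 ?(ltW w_gt0) // -powRD ?subrK //.
  by rewrite gt_eqF ?implybT.
by rewrite /marginal /GRing.scale /=; ring.
Qed.

Lemma marginal_le0_at_right_max s u e : 0 < u -> 0 < u + s < 1 -> 0 < e ->
  (forall h, 0 < h < e -> payoff s (u + h) <= payoff s u) -> marginal s u <= 0.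
Proof.
move=> u_gt0 us_itv e_gt0 umax.
have [du du_val] := is_derive_share_payoff s u u_gt0 us_itv.
have := @derive1_le0_at_right_max _ _ u e e_gt0 du umax.
by rewrite derive1E du_val pmulr_rle0 // powR_gt0.
Qed.

Lemma marginal_ge0_at_left_max t v : 0 < v -> 0 < v + t < 1 ->
  (forall h, 0 < h < v -> payoff t (v - h) <= payoff t v) -> 0 <= marginal t v.
Proof.
move=> v_gt0 vt_itv vmax.
have [dv dv_val] := is_derive_share_payoff t v v_gt0 vt_itv.
have := @derive1_ge0_at_left_max _ _ v v v_gt0 dv vmax.
by rewrite derive1E dv_val pmulr_rge0 // powR_gt0.
Qed.

Lemma marginal_decr s t u v :
  0 < u < v -> 0 <= s -> u + s <= v + t -> v + t < 1 ->
  marginal t v < marginal s u.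
Proof.
move=> /andP[u_gt0 uv] s_ge0 load_le vt_lt1.
have us_itv : u + s \in `]0, 1[%R by rewrite in_itv /=; lra.
have vt_itv : v + t \in `]0, 1[%R by rewrite in_itv /=; lra.
have F_le : F (v + t) <= F (u + s).
  by apply: (ltW_nhomo_in F_decr) => //; apply: subset_itv_oo_cc.
have F'_le : F^`() (v + t) <= F^`() (u + s) by exact: derive1F_nincr.
have F'vt_lt0 : F^`() (v + t) < 0 by have [] := F'_lt0 _ vt_itv.
have : v * derive1 F (v + t) < u * derive1 F (v + t) by rewrite ltr_nM2r.
have : u * derive1 F (v + t) <= u * derive1 F (u + s) by rewrite ler_pM2l.
have : alpha * F (v + t) <= alpha * F (u + s) by rewrite ler_pM2l.
rewrite /marginal; lra.
Qed.

Lemma load_lt_of_left_max t v : 0 < v -> 0 <= t -> v + t <= omega ->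
  (forall h, 0 < h < v -> payoff t (v - h) <= payoff t v) -> v + t < omega.
Proof.
move=> v_gt0 t_ge0 vt_le vmax.
rewrite lt_neqAle vt_le andbT; apply/eqP => vt_eq.
have : payoff t (v - v / 2) <= 0.
  have := vmax (v / 2); rewrite {2}/share_payoff vt_eq F_omega mulr0.
  by apply; lra.
by rewrite leNgt share_payoff_gt0 //; lra.
Qed.

Lemma share_gt0_of_right_max s u e :
  0 <= u -> 0 <= s -> 0 < e -> u + e + s <= omega ->
  (forall h, 0 < h < e -> payoff s (u + h) <= payoff s u) -> 0 < u.
Proof.
move=> u_ge0 s_ge0 e_gt0 ues_le umax; rewrite lt0r u_ge0 andbT; apply/eqP => u0.
have : payoff s (u + e / 2) <= 0.
  have := umax (e / 2); rewrite {2}/share_payoff u0 powR0 ?gt_eqF // mul0r.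
  by apply; lra.
by rewrite leNgt share_payoff_gt0 //; lra.
Qed.

Theorem share_best_responses_not_ordered s t u v e :
  0 <= u < v -> 0 <= s -> 0 <= t -> u + s <= v + t <= omega -> 0 < e ->
  (forall w, u <= w <= u + e -> w + s < omega -> payoff s w <= payoff s u) ->
  (forall w, 0 <= w <= v -> payoff t w <= payoff t v) -> False.
Proof.
move=> /andP[u_ge0 uv] s_ge0 t_ge0 /andP[load_le vt_le] e_gt0 umax vmax.
have v_gt0 : 0 < v by lra.
have vmax_left : forall h, 0 < h < v -> payoff t (v - h) <= payoff t v.
  by move=> h h_itv; apply: vmax; lra.
have vt_lt : v + t < omega by apply: load_lt_of_left_max.
have [d d_gt0 [d_le_e d_le]] :
    exists2 d : R, 0 < d & d <= e /\ d <= omega - (u + s).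
  exists (Num.min e (omega - (u + s))).
    by rewrite lt_min e_gt0 subr_gt0; lra.
  by split; rewrite ge_min lexx ?orbT.
have umax_right : forall h, 0 < h < d -> payoff s (u + h) <= payoff s u.
  by move=> h h_itv; apply: umax; lra.
have u_gt0 : 0 < u by apply: (share_gt0_of_right_max s u d) => //; lra.
have vt_lt1 : v + t < 1 := lt_trans vt_lt omega_lt1.
have us_itv : 0 < u + s < 1 by lra.
have vt_itv : 0 < v + t < 1 by lra.
have := marginal_le0_at_right_max s u d u_gt0 us_itv d_gt0 umax_right.
have := marginal_ge0_at_left_max t v v_gt0 vt_itv vmax_left.
suff : marginal t v < marginal s u by lra.
by apply: marginal_decr => //; lra.
Qed.

End ShareOfOneResource.

Section UnilateralDeviation.
Context {R : realType} {n m : nat} {Rr p : 'I_m -> R -> R} {a k : 'I_n -> R}.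
Context {omega : 'I_n -> 'I_m -> R}.
Implicit Types (x : profile R n m) (i : 'I_n) (j : 'I_m).
Implicit Types (z : 'I_m -> R) (w : R).

Local Notation V := (Vi Rr p a k).
Local Notation payoff i j s := (share_payoff (Fij Rr p a k i j) (a i) s).

Lemma xT_upd x i z j : xT (upd x i z) j = z j + xT_but x i j.
Proof.
rewrite /xT (bigD1 i) //= /upd eqxx; congr (_ + _).
by apply: eq_bigr => l /negbTE ->.
Qed.

Lemma upd_id x i : upd x i (x i) = x.
Proof. by apply/funext => l; rewrite /upd; case: eqVneq => [->|]. Qed.

Lemma xT_split x i j : xT x j = x i j + xT_but x i j.
Proof. by rewrite -{1}(upd_id x i) xT_upd. Qed.

Lemma xT_but_ge0 x i j : in_Cn x -> 0 <= xT_but x i j.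
Proof. by move=> x_Cn; apply: sumr_ge0 => l _; case/andP: ((x_Cn l).1 j). Qed.

Lemma Vi_upd x i z : V i (upd x i z) = \sum_j payoff i j (xT_but x i j) (z j).
Proof. by apply: eq_bigr => j _; rewrite xT_upd /upd eqxx. Qed.

Definition set_share x i j w : 'I_m -> R :=
  fun j' => if j' == j then w else x i j'.

Lemma Vi_set_share x i j w : V i (upd x i (set_share x i j w)) - V i x =
  payoff i j (xT_but x i j) w - payoff i j (xT_but x i j) (x i j).
Proof.
have := Vi_upd x i (x i); rewrite upd_id => ->.
rewrite Vi_upd (bigD1 j) //= [X in _ - X](bigD1 j) //= /set_share eqxx.
under eq_bigr => j' /negbTE -> do [].
by rewrite opprD addrACA subrr addr0.
Qed.

Lemma set_share_feasible x i j w : in_Cn x -> in_vartheta omega x i (x i) ->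
  0 <= w -> \sum_j' x i j' - x i j + w <= 1 ->
  xT_but x i j < omega i j -> w + xT_but x i j <= omega i j ->
  in_vartheta omega x i (set_share x i j w).
Proof.
move=> x_Cn [_ x_feas] w_ge0 sum_le xT_lt load_le.
have others_ge0 : 0 <= \sum_(j' | j' != j) x i j'.
  by apply: sumr_ge0 => j' _; case/andP: ((x_Cn i).1 j').
move: sum_le; rewrite (bigD1 j) //= => sum_le.
split; [split|].
- move=> j'; rewrite /set_share; case: eqVneq => _; last exact: (x_Cn i).1 j'.
  lra.
- rewrite (bigD1 j) //= /set_share eqxx.
  under eq_bigr => j' /negbTE -> do []; lra.
- move=> j'; rewrite /set_share; case: eqVneq => [->|_]; last exact: x_feas j'.
  by rewrite xT_lt; lra.
Qed.

Lemma GNE_set_share_le x i j w : is_GNE Rr p a k omega x ->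
  0 <= w -> \sum_j' x i j' - x i j + w <= 1 ->
  xT_but x i j < omega i j -> w + xT_but x i j <= omega i j ->
  payoff i j (xT_but x i j) w <= payoff i j (xT_but x i j) (x i j).
Proof.
move=> [x_Cn x_eq] *; have [x_feas x_best] := x_eq i.
by rewrite -subr_le0 -Vi_set_share subr_le0; apply/x_best/set_share_feasible.
Qed.

Lemma GNE_share_load x i j : is_GNE Rr p a k omega x -> 0 < x i j ->
  xT_but x i j < omega i j /\ x i j + xT_but x i j <= omega i j.
Proof.
move=> [_ /(_ i) [[_ /(_ j) x_j] _]] x_gt0; move: x_j.
case: ifP => [xT_lt /andP[_ x_le] | _ /eqP x0]; last first.
  by rewrite x0 ltxx in x_gt0.
by split => //; lra.
Qed.

End UnilateralDeviation.

Theorem lemma8 (R : realType) (n m : nat)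
  (Rr p : 'I_m -> R -> R) (a k : 'I_n -> R) (omega : 'I_n -> 'I_m -> R)
  (hn : (0 < n)%N) (hm : (0 < m)%N) (hmn : (m <= n)%N)
  (hR : forall j t, 1 < Rr j t)
  (hp01 : forall j t, 0 <= p j t <= 1)
  (hp0 : forall j, p j 0 = 0)
  (hp1 : forall j t, 1 <= t -> p j t = 1)
  (ha : forall i, 0 < a i <= 1)
  (hk : forall i, 0 < k i)
  (hFcont : forall i j, {within `[0, 1], continuous (Fij Rr p a k i j : R -> R)})
  (hFd1 : forall i j t, 0 < t < 1 ->
     derivable (Fij Rr p a k i j) t 1 /\ (Fij Rr p a k i j)^`() t < 0)
  (hFd2 : forall i j t, 0 < t < 1 ->
     derivable ((Fij Rr p a k i j)^`()) t 1 /\ (Fij Rr p a k i j)^`(2) t < 0)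
  (homega : forall i j, 0 < omega i j < 1 /\ Fij Rr p a k i j (omega i j) = 0) :
  ~ exists x y : profile R n m,
      [/\ is_GNE Rr p a k omega x, is_GNE Rr p a k omega y, x <> y,
          (forall j, xT x j <= xT y j) &
          \sum_(j < m) xT x j < \sum_(j < m) xT y j].
Proof.
case=> x [y [x_GNE y_GNE _ xT_le sum_lt]].
have [i row_lt] : exists i, \sum_j x i j < \sum_j y i j.
  by apply: sumr_lt_exists; rewrite exchange_big [X in _ < X]exchange_big.
have [j xy_ij] := sumr_lt_exists row_lt.
have [/andP[omega_gt0 omega_lt1] F_omega] := homega i j.
have [a_gt0 _] := andP (ha i).
have [x_Cn y_Cn] := (x_GNE.1, y_GNE.1).
have [x_ij_ge0 _] := andP ((x_Cn i).1 j).
have [y_xT_lt y_load_le] :=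
  GNE_share_load y i j y_GNE (le_lt_trans x_ij_ge0 xy_ij).
have y_row_le1 := (y_Cn i).2.
apply: (share_best_responses_not_ordered (hFcont i j) (hFd1 i j) (hFd2 i j)
  a_gt0 omega_gt0 omega_lt1 F_omega (xT_but x i j) (xT_but y i j)
  (x i j) (y i j) (1 - \sum_j x i j)).
- by rewrite x_ij_ge0 xy_ij.
- exact: xT_but_ge0.
- exact: xT_but_ge0.
- by rewrite y_load_le andbT -!xT_split.
- lra.
- move=> w /andP[xw w_le] load_lt.
  by apply: (GNE_set_share_le x i j w x_GNE); lra.
- move=> w /andP[w_ge0 w_le].
  by apply: (GNE_set_share_le y i j w y_GNE); lra.
Qed.
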